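(* Let $f(x)=\frac1n\sum_{i=1}^nf_i(x)$ on $\mathbb{R}^d$ where each $f_i$ is lower bounded and $L_i$-smooth, and let $(c_k)_{k\ge0}$ be any non-decreasing positive sequence of real numbers. Under the DecSPS stepsize (defined in the context), for every $k\in\mathbb{N}$, $$\min\left\{\frac1{2c_kL_{\max}},\frac{c_0\gamma_b}{c_k}\right\}\le\gamma_k\le\frac{c_0\gamma_b}{c_k},$$ where $L_{\max}=\max_iL_i$, and moreover $\gamma_k\le\gamma_{k-1}$.
   Context: For $\mathcal S\subseteq[n]$, $f_{\mathcal S}:=\frac1{|\mathcal S|}\sum_{i\in\mathcal S}f_i$, $f^*_{\mathcal S}:=\inf_xf_{\mathcal S}(x)$, and $\ell^*_{\mathcal S}$ is a given real number with $\ell^*_{\mathcal S}\le f^*_{\mathcal S}$. Given any sequence of minibatches $\mathcal S_k\subseteq[n]$ and points $x^k$ (the SGD iterates $x^{k+1}=x^k-\gamma_k\nabla f_{\mathcal S_k}(x^k)$) with $\nabla f_{\mathcal S_k}(x^k)\ne0$, the DecSPS stepsize is $\gamma_k:=\frac1{c_k}\min\left\{\frac{f_{\mathcal S_k}(x^k)-\ell^*_{\mathcal S_k}}{\|\nabla f_{\mathcal S_k}(x^k)\|^2},\ c_{k-1}\gamma_{k-1}\right\}$ for $k\ge0$, with $c_{-1}=c_0$ and $\gamma_{-1}=\gamma_b>0$ a fixed constant. *)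

From HB Require Import structures.
From mathcomp Require Import all_boot all_order all_algebra.
From mathcomp Require Import all_classical all_reals all_analysis.
Set Implicit Arguments. Unset Strict Implicit. Unset Printing Implicit Defensive.
Import Order.TTheory GRing.Theory Num.Theory.
Import numFieldNormedType.Exports.
Local Open Scope ring_scope.

Definition enorm {R : realType} {d : nat} (v : 'rV[R]_d) : R :=
  Num.sqrt (\sum_(j < d) v 0 j ^+ 2).

Definition grad {R : realType} {d : nat} (f : 'rV[R]_d -> R) (x : 'rV[R]_d)
  : 'rV[R]_d := \row_(j < d) ('d f x (delta_mx 0 j : 'rV[R]_d)).

Definition Lsmooth {R : realType} {d : nat} (L : R) (f : 'rV[R]_d -> R) : Prop :=
  (forall x, differentiable f x) /\
  (forall x y, enorm (grad f x - grad f y) <= L * enorm (x - y)).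

Definition lower_bounded {R : realType} {d : nat} (f : 'rV[R]_d -> R) : Prop :=
  exists b : R, forall x, b <= f x.

Definition fS {R : realType} {n d : nat} (f : 'I_n -> 'rV[R]_d -> R)
  (S : {set 'I_n}) (x : 'rV[R]_d) : R :=
  (#|S|%:R)^-1 * \sum_(i in S) f i x.

Definition Lmax {R : realType} {n : nat} (L : 'I_n -> R) : R :=
  \big[Num.max/0]_(i < n) L i.

(* c_{k-1} * gamma_{k-1}, with c_{-1} = c_0 and gamma_{-1} = gamma_b. *)
Definition prev_cg {R : realType} (c gamma : nat -> R) (gamma_b : R) (k : nat) : R :=
  if k is k'.+1 then c k' * gamma k' else c 0%N * gamma_b.

(* gamma_{k-1}, with gamma_{-1} = gamma_b. *)
Definition prev_gamma {R : realType} (gamma : nat -> R) (gamma_b : R) (k : nat) : R :=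
  if k is k'.+1 then gamma k' else gamma_b.

From HB Require Import structures.
From mathcomp Require Import all_boot all_order all_algebra.
From mathcomp Require Import all_classical all_reals all_analysis.
From mathcomp Require Import ring lra.
Import Order.TTheory GRing.Theory Num.Theory.
Import numFieldNormedType.Exports.
Set Implicit Arguments. Unset Strict Implicit. Unset Printing Implicit Defensive.
Local Open Scope ring_scope.

(* Put b_k := c_k gamma_k and let A_k be the Polyak ratio
   (f_{S_k}(x^k) - l*_{S_k}) / |grad f_{S_k}(x^k)|^2.  The stepsize rule reads
   b_k = min(A_k, b_{k-1}) with b_{-1} = c_0 gamma_b, so b is a running minimum:
   it is non-increasing, at most c_0 gamma_b, and at least
   min(inf_k A_k, c_0 gamma_b).  Every f_i is L_max-smooth, hence satisfies the
   quadratic upper bound f(x + v) <= f(x) + <grad f(x), v> + L_max/2 |v|^2, which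
   is stable under averaging; at v = - grad f_S(x) / L_max it yields, with
   l*_S <= f_S, the bound |grad f_S(x)|^2 <= 2 L_max (f_S(x) - l*_S), i.e.
   A_k >= 1 / (2 L_max).  Dividing by c_k gives the two bounds on gamma_k, and
   gamma_{k+1} <= gamma_k follows from b_{k+1} <= b_k and c_k <= c_{k+1}. *)

Lemma mulr_le_amgm (R : realFieldType) (a b e : R) :
  0 < e -> 2 * (a * b) <= a ^+ 2 / e + e * b ^+ 2.
Proof.
move=> e0; have sq_ge0 : 0 <= (a - e * b) ^+ 2 / e by rewrite divr_ge0 ?sqr_ge0 ?ltW.
have -> : a ^+ 2 / e + e * b ^+ 2 = 2 * (a * b) + (a - e * b) ^+ 2 / e.
  by field; rewrite gt_eqF.
by rewrite lerDl.
Qed.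

Section Euclidean.
Variables (R : realType) (d : nat).
Implicit Types (u v w : 'rV[R]_d) (a e : R).

Definition dotv u v : R := \sum_(j < d) u 0 j * v 0 j.

Lemma sqr_enorm v : enorm v ^+ 2 = dotv v v.
Proof.
rewrite /enorm sqr_sqrtr; last by apply: sumr_ge0 => j _; exact: sqr_ge0.
by apply: eq_bigr => j _; rewrite expr2.
Qed.

Lemma enorm_ge0 v : 0 <= enorm v.
Proof. exact: sqrtr_ge0. Qed.

Lemma enorm_gt0 v : v != 0 -> 0 < enorm v.
Proof.
move=> v0; rewrite sqrtr_gt0 lt_def sumr_ge0 ?andbT => [|j _]; last exact: sqr_ge0.
rewrite psumr_eq0 => [|j _]; last exact: sqr_ge0.
apply: contra v0 => /allP v_eq0; apply/eqP/rowP => j.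
by have := v_eq0 j (mem_index_enum j); rewrite /= sqrf_eq0 mxE => /eqP.
Qed.

Lemma enormZ a v : enorm (a *: v) = `|a| * enorm v.
Proof.
rewrite /enorm; under eq_bigr do rewrite mxE exprMn.
by rewrite -mulr_sumr sqrtrM ?sqrtr_sqr // sqr_ge0.
Qed.

Lemma dotvZr a u v : dotv u (a *: v) = a * dotv u v.
Proof. by rewrite /dotv mulr_sumr; apply: eq_bigr => j _; rewrite mxE mulrCA. Qed.

Lemma dotvBl u w v : dotv (u - w) v = dotv u v - dotv w v.
Proof. by rewrite /dotv -sumrB; apply: eq_bigr => j _; rewrite !mxE mulrBl. Qed.

Lemma dotv_le_amgm e u v :
  0 < e -> 2 * dotv u v <= enorm u ^+ 2 / e + e * enorm v ^+ 2.
Proof.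
move=> e0; rewrite !sqr_enorm /dotv mulr_sumr mulr_suml mulr_sumr -big_split.
by apply: ler_sum => j _; rewrite -!expr2; exact: mulr_le_amgm.
Qed.

Lemma diff_grad (G : 'rV[R]_d -> R) x v : 'd G x v = dotv (grad G x) v.
Proof.
rewrite {1}(row_sum_delta v) linear_sum; apply: eq_bigr => j _.
by rewrite linearZ /grad mxE mulrC.
Qed.

End Euclidean.

Lemma le_of_derive_le_affine (R : realType) (h h' : R -> R) (D K : R) :
  (forall t : R, is_derive t 1 h (h' t)) ->
  (forall t : R, 0 < t < 1 -> h' t - D <= 2 * K * t) ->
  h 1 <= h 0 + D + K.
Proof.
move=> h'E h'_le.
pose psi := h - D \*: id - K \*: (id * id).
have psi' t : is_derive t (1 : R) psi (h' t - D *: 1 - K *: (t *: 1 + t *: 1)).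
  by apply: is_deriveB; apply: is_deriveB.
have : psi 1 <= psi 0.
  apply: (@ler0_derive1_le_cc _ psi 0 1); rewrite ?in_itv /= ?ler01 ?lexx //.
  - move=> t; rewrite in_itv /= => /andP[t0 t1].
    rewrite derive1E derive_val -[D%:A]/(D * 1) -[t%:A]/(t * 1) -[K *: _]/(K * _) !mulr1.
    by have := h'_le t; rewrite t0 t1 /=; lra.
  - by apply: derivable_within_continuous => t _; case: (psi' t).
rewrite /psi !fctE /= mulr0 !scaler0 !subr0.
by rewrite -[D *: _]/(D * _) -[K *: _]/(K * _) !mulr1; lra.
Qed.

Section Smoothness.
Variables (R : realType) (d : nat).
Implicit Types (G : 'rV[R]_d -> R) (x v : 'rV[R]_d) (M : R).

Definition quad_upper_bound M G :=
  forall x v, G (x + v) <= G x + dotv (grad G x) v + M / 2 * enorm v ^+ 2.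

Lemma Lsmooth_le M M' G : M <= M' -> Lsmooth M G -> Lsmooth M' G.
Proof.
move=> MM' [dG lipG]; split=> // x y; apply: le_trans (lipG x y) _.
by rewrite ler_wpM2r ?enorm_ge0.
Qed.

Lemma is_derive_along G x v (t : R) : differentiable G (x + t *: v) ->
  is_derive t 1 (fun s : R => G (x + s *: v)) (dotv (grad G (x + t *: v)) v).
Proof.
move=> dG; rewrite -diff_grad.
have quotE : (fun s : R => s^-1 *: (G (x + (s *: 1 + t) *: v) - G (x + t *: v))) =
    (fun s : R => s^-1 *: (G (s *: v + (x + t *: v)) - G (x + t *: v))).
  apply: funext => s; congr (_ *: (G _ - _)).
  by rewrite -[s%:A]/(s * 1) mulr1 scalerDl addrCA.
split; first by rewrite /derivable /= quotE; exact: diff_derivable.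
by rewrite /derive /= quotE -/(derive G (x + t *: v) v) deriveE.
Qed.

Lemma grad_incr_le M G x v (t : R) : 0 < M -> 0 < t -> Lsmooth M G ->
  dotv (grad G (x + t *: v) - grad G x) v <= M * t * enorm v ^+ 2.
Proof.
move=> M0 t0 [_ lipG]; set a := grad G (x + t *: v) - grad G x.
have Mt0 : 0 < M * t by rewrite mulr_gt0.
have a_le : enorm a ^+ 2 <= (M * t) ^+ 2 * enorm v ^+ 2.
  have := lipG (x + t *: v) x; rewrite -/a addrAC subrr add0r enormZ gtr0_norm // mulrA.
  by move=> a_le; rewrite -exprMn ![_ ^+ 2]expr2 ler_pM ?enorm_ge0.
have a_div : enorm a ^+ 2 / (M * t) <= M * t * enorm v ^+ 2.
  by rewrite ler_pdivrMr // mulrAC -[M * t * (M * t)]expr2.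
have := dotv_le_amgm a v Mt0; lra.
Qed.

Lemma Lsmooth_quad_upper_bound M G : 0 < M -> Lsmooth M G -> quad_upper_bound M G.
Proof.
move=> M0 smG x v; have [dG _] := smG.
have := @le_of_derive_le_affine R (fun s => G (x + s *: v))
  (fun t => dotv (grad G (x + t *: v)) v) (dotv (grad G x) v) (M / 2 * enorm v ^+ 2).
rewrite scale1r scale0r addr0; apply=> [t|t /andP[t0 _]]; first exact: is_derive_along.
rewrite -dotvBl; apply: le_trans (grad_incr_le x v M0 t0 smG) _; lra.
Qed.

Lemma quad_upper_bound_grad_le M G (l : R) x : 0 < M -> quad_upper_bound M G ->
  (forall y, l <= G y) -> enorm (grad G x) ^+ 2 / (2 * M) <= G x - l.
Proof.
move=> M0 qG lG; set g := grad G x.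
have := qG x (- M^-1 *: g); rewrite dotvZr -sqr_enorm enormZ normrN gtr0_norm ?invr_gt0 //.
have -> : M / 2 * (M^-1 * enorm g) ^+ 2 = enorm g ^+ 2 / (2 * M).
  by field; rewrite gt_eqF.
have := lG (x + - M^-1 *: g); lra.
Qed.

End Smoothness.

Lemma is_diff_sum (R : realType) (V W : normedModType R) (I : finType) (P : pred I)
    (h : I -> V -> W) x :
  (forall i, differentiable (h i) x) ->
  is_diff x (\sum_(i | P i) h i) (\sum_(i | P i) ('d (h i) x : V -> W)).
Proof.
move=> dh; elim/big_ind2: _ => [|f1 df1 f2 df2 ? ?|i _]; first exact: is_diff_cst.
  exact: is_diffD.
exact: differentiableP.
Qed.

Section Minibatch.
Variables (R : realType) (n d : nat) (f : 'I_n -> 'rV[R]_d -> R).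

Lemma fSE S : fS f S = (#|S|%:R)^-1 *: \sum_(i in S) f i.
Proof. by apply: funext => y; rewrite /fS fct_sumE. Qed.

Lemma dotv_grad_fS S x v : (forall i, differentiable (f i) x) ->
  dotv (grad (fS f S) x) v = (#|S|%:R)^-1 * \sum_(i in S) dotv (grad (f i) x) v.
Proof.
move=> df; under eq_bigr do rewrite -diff_grad.
have dfS := is_diffZ (#|S|%:R)^-1 (is_diff_sum (fun i => i \in S) df).
by rewrite -diff_grad fSE diff_val /= fct_sumE.
Qed.

Lemma quad_upper_bound_fS M (S : {set 'I_n}) : (0 < #|S|)%N ->
  (forall i x, differentiable (f i) x) -> (forall i, quad_upper_bound M (f i)) ->
  quad_upper_bound M (fS f S).
Proof.
move=> S0 df qf x v; rewrite dotv_grad_fS // /fS.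
set c := (#|S|%:R)^-1; set K := M / 2 * enorm v ^+ 2.
have c0 : 0 <= c by rewrite invr_ge0 ler0n.
have cS : c * #|S|%:R = 1 by rewrite mulVf // pnatr_eq0 -lt0n.
have : \sum_(i in S) f i (x + v) <= \sum_(i in S) (f i x + dotv (grad (f i) x) v + K).
  by apply: ler_sum => i _; exact: qf.
rewrite !big_split /= sumr_const => /(ler_wpM2l c0).
by rewrite !mulrDr -mulr_natr mulrCA cS mulr1.
Qed.

End Minibatch.

Lemma Lmax_ge (R : realType) n (L : 'I_n -> R) i : L i <= Lmax L.
Proof. by rewrite /Lmax (bigD1 i) //= le_max lexx. Qed.

Lemma Lmax_ge0 (R : realType) n (L : 'I_n -> R) : 0 <= Lmax L.
Proof. by rewrite /Lmax; elim/big_rec: _ => // i y _ y_ge0; rewrite le_max y_ge0 orbT. Qed.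

Lemma polyak_ratio_ge (R : realType) n d (f : 'I_n -> 'rV[R]_d -> R) (L : 'I_n -> R)
    (S : {set 'I_n}) (l : R) x :
  (forall i, Lsmooth (L i) (f i)) -> (0 < #|S|)%N -> (forall y, l <= fS f S y) ->
  grad (fS f S) x != 0 ->
  (2 * Lmax L)^-1 <= (fS f S x - l) / enorm (grad (fS f S) x) ^+ 2.
Proof.
move=> smf S0 lf g0; have g_gt0 := enorm_gt0 g0.
have gap_ge0 : 0 <= fS f S x - l by rewrite subr_ge0.
(* For [Lmax L <= 0] the left side is nonpositive, [0^-1] being [0]. *)
have [M_le0|M_gt0] := leP (Lmax L) 0.
  apply: le_trans (_ : 0 <= _); last by rewrite divr_ge0 // exprn_ge0 // enorm_ge0.
  by rewrite invr_le0 pmulr_rle0.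
have qfS : quad_upper_bound (Lmax L) (fS f S).
  apply: quad_upper_bound_fS => // [i y|i]; first by case: (smf i).
  by apply: Lsmooth_quad_upper_bound => //; apply: Lsmooth_le (smf i); exact: Lmax_ge.
rewrite ler_pdivlMr ?exprn_gt0 // mulrC.
exact: quad_upper_bound_grad_le.
Qed.

Section RunningMin.
Variables (R : realType) (a b : nat -> R) (b0 : R).
Hypothesis bE : forall k, b k = Num.min (a k) (if k is k'.+1 then b k' else b0).

Lemma running_min_le_init k : b k <= b0.
Proof. by elim: k => [|k IHk]; rewrite bE ge_min ?lexx ?IHk ?orbT. Qed.

Lemma running_min_decr k : b k.+1 <= b k.
Proof. by rewrite bE ge_min lexx orbT. Qed.

Lemma running_min_ge (m : R) k : (forall k, m <= a k) -> Num.min m b0 <= b k.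
Proof.
move=> ma; have min_le_a j : Num.min m b0 <= a j by rewrite ge_min ma.
by elim: k => [|k IHk]; rewrite bE le_min min_le_a ?IHk // ge_min lexx orbT.
Qed.

End RunningMin.

Theorem lemma1 (R : realType) (n d : nat)
  (f : 'I_n -> 'rV[R]_d -> R) (L : 'I_n -> R)
  (hlb : forall i, lower_bounded (f i))
  (hsm : forall i, Lsmooth (L i) (f i))
  (c : nat -> R) (hcpos : forall k, 0 < c k)
  (hcmon : forall k, c k <= c k.+1)
  (ell : {set 'I_n} -> R)
  (hell : forall S x, ell S <= fS f S x)
  (S : nat -> {set 'I_n}) (hSne : forall k, S k != finset.set0)
  (x : nat -> 'rV[R]_d) (gamma : nat -> R) (gamma_b : R) (hgb : 0 < gamma_b)
  (hgrad : forall k, grad (fS f (S k)) (x k) != 0)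
  (hx : forall k, x k.+1 = x k - gamma k *: grad (fS f (S k)) (x k))
  (hgamma : forall k, gamma k =
     (c k)^-1 * Num.min
       ((fS f (S k) (x k) - ell (S k)) / (enorm (grad (fS f (S k)) (x k))) ^+ 2)
       (prev_cg c gamma gamma_b k)) :
  forall k : nat,
    Num.min ((2 * c k * Lmax L)^-1) (c 0%N * gamma_b / c k) <= gamma k
    /\ gamma k <= c 0%N * gamma_b / c k
    /\ gamma k <= prev_gamma gamma gamma_b k.
Proof.
pose A k := (fS f (S k) (x k) - ell (S k)) / enorm (grad (fS f (S k)) (x k)) ^+ 2.
pose b k := c k * gamma k.
have bE k : b k = Num.min (A k) (if k is k'.+1 then b k' else c 0%N * gamma_b).
  by rewrite /b hgamma mulVKf ?gt_eqF //; case: k.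
have A_ge k : (2 * Lmax L)^-1 <= A k.
  by apply: polyak_ratio_ge; rewrite ?card_gt0.
have b_ge0 k : 0 <= b k.
  apply: le_trans (running_min_ge bE k A_ge).
  by rewrite le_min invr_ge0 mulr_ge0 ?Lmax_ge0 ?mulr_ge0 ?ltW.
move=> k; split; last split.
- rewrite mulrAC invfM !(mulrC _ (c k)^-1) -minr_pMr ?invr_ge0 ?(ltW (hcpos k)) //.
  by rewrite ler_pdivrMl //; have := running_min_ge bE k A_ge.
- by rewrite (mulrC _ (c k)^-1) ler_pdivlMl //; have := running_min_le_init bE k.
- case: k => [|k] /=.
    by rewrite -(ler_pM2l (hcpos 0%N)); have := running_min_le_init bE 0.
  rewrite -(ler_pM2l (hcpos k.+1)).
  apply: le_trans (running_min_decr bE k) (ler_wpM2r _ (hcmon k)).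
  by rewrite -(pmulr_rge0 _ (hcpos k)); have := b_ge0 k.
Qed.
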